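(* Fix $\alpha>0$. For $0<t\le1$ and $\mu\ge1$ define $$k_t(\mu)=\frac{(1+t\mu)^{2\alpha}\ln\left(1+\frac{t}{\mu}\right)+(\mu+t)^{2\alpha}\ln(1+t\mu)}{(1+t\mu)^{2\alpha}+(\mu+t)^{2\alpha}}.$$ Then for every $t\in(0,1]$, $\inf_{\mu\ge1}k_t(\mu)=\ln(1+t)$. *)

From Stdlib Require Import Reals.
Open Scope R_scope.

(* k_t(mu) for fixed alpha; real powers via Rpower (bases are positive here). *)
Definition k (alpha t mu : R) : R :=
  (Rpower (1 + t * mu) (2 * alpha) * ln (1 + t / mu)
   + Rpower (mu + t) (2 * alpha) * ln (1 + t * mu))
  / (Rpower (1 + t * mu) (2 * alpha) + Rpower (mu + t) (2 * alpha)).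

Definition is_glb (E : R -> Prop) (m : R) : Prop :=
  (forall x, E x -> m <= x) /\ (forall b, (forall x, E x -> b <= x) -> b <= m).

From Stdlib Require Import Reals Lra.
Open Scope R_scope.

(* At [mu = 1] both terms of [k] equal [ln (1 + t)], so the value is attained.
   For [mu >= 1], AM-GM gives [(1 + t mu)(1 + t / mu) >= (1 + t)^2], i.e. the
   upper logarithm [ln (1 + t mu)] lies at least as far above [ln (1 + t)] as
   [ln (1 + t / mu)] lies below it; and the upper logarithm carries the larger
   weight [(mu + t)^(2 alpha) >= (1 + t mu)^(2 alpha)], since
   [mu + t - (1 + t mu) = (mu - 1)(1 - t) >= 0]. *)

Lemma ln_le x y : 0 < x -> x <= y -> ln x <= ln y.
Proof.
intros Hx [Hlt | ->]; [left; apply ln_increasing; assumption | lra].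
Qed.

Lemma Rpower_pos x y : 0 < Rpower x y.
Proof. apply exp_pos. Qed.

Lemma sqr_1_plus_le_mul_inv t mu :
  0 <= t -> 0 < mu -> (1 + t) * (1 + t) <= (1 + t * mu) * (1 + t / mu).
Proof.
intros Ht Hmu.
assert (Hexp : (1 + t * mu) * (1 + t / mu) - (1 + t) * (1 + t)
               = t * ((mu - 1) * (mu - 1) / mu)) by (field; lra).
assert (0 <= (mu - 1) * (mu - 1) / mu)
  by (apply Rmult_le_pos; [apply Rle_0_sqr | left; apply Rinv_0_lt_compat; lra]).
assert (0 <= t * ((mu - 1) * (mu - 1) / mu)) by (apply Rmult_le_pos; lra).
lra.
Qed.

Lemma ln_1_plus_midpoint t mu :
  0 <= t -> 0 < mu ->
  ln (1 + t) - ln (1 + t / mu) <= ln (1 + t * mu) - ln (1 + t).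
Proof.
intros Ht Hmu.
assert (0 <= t / mu) by (apply Rmult_le_pos; [lra | left; apply Rinv_0_lt_compat; lra]).
assert (0 <= t * mu) by (apply Rmult_le_pos; lra).
assert (Hln : ln ((1 + t) * (1 + t)) <= ln ((1 + t * mu) * (1 + t / mu)))
  by (apply ln_le; [nra | apply sqr_1_plus_le_mul_inv; assumption]).
rewrite !ln_mult in Hln by lra.
lra.
Qed.

Lemma weighted_mean_ge (A B x y m : R) :
  0 < A -> A <= B -> m <= y -> m - x <= y - m -> m <= (A * x + B * y) / (A + B).
Proof.
intros HA HAB Hmy Hxy.
apply Rmult_le_reg_r with (A + B); [lra |].
unfold Rdiv; rewrite Rmult_assoc, Rinv_l, Rmult_1_r by lra.
assert (A * (m - x) <= A * (y - m)) by (apply Rmult_le_compat_l; lra).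
assert (A * (y - m) <= B * (y - m)) by (apply Rmult_le_compat_r; lra).
lra.
Qed.

Lemma k_at_1 alpha t : 0 < 1 + t -> k alpha t 1 = ln (1 + t).
Proof.
intros Ht. unfold k.
replace (t * 1) with t by ring; replace (t / 1) with t by field.
assert (0 < Rpower (1 + t) (2 * alpha)) by apply Rpower_pos.
field; lra.
Qed.

Lemma k_ge_ln_1_plus alpha t mu :
  0 < alpha -> 0 < t -> t <= 1 -> 1 <= mu -> ln (1 + t) <= k alpha t mu.
Proof.
intros Halpha Ht0 Ht1 Hmu. unfold k.
apply weighted_mean_ge.
- apply Rpower_pos.
- apply Rle_Rpower_l; [lra | split; nra].
- apply ln_le; nra.
- apply ln_1_plus_midpoint; lra.
Qed.

Theorem lemma2p4 (alpha : R) (halpha : 0 < alpha) (t : R) (ht0 : 0 < t) (ht1 : t <= 1) :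
  is_glb (fun y => exists mu, 1 <= mu /\ y = k alpha t mu) (ln (1 + t)).
Proof.
split.
- intros y [mu [Hmu ->]]. apply k_ge_ln_1_plus; assumption.
- intros b Hb. rewrite <- (k_at_1 alpha t) by lra.
  apply Hb. exists 1. split; [lra | reflexivity].
Qed.
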